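(* Let $\mathcal A$ be a Banach algebra and let $X$ be a left Banach $\mathcal A$-submodule of $\mathcal A^*$. Then $B_{\mathcal A}(\mathcal A, X^* )=(Q_X)^*$; that is, $B_{\mathcal A}(\mathcal A,X^* )$ (with the operator norm) is isometrically isomorphic, via the canonical pairing $\langle T, af\rangle=\langle f,T(a)\rangle$, to the dual Banach space of $Q_X$.
   Context: $\mathcal A^*$ is a left Banach $\mathcal A$-module via $\langle a\cdot f,b\rangle=\langle f,ba\rangle$ ($a,b\in\mathcal A$, $f\in\mathcal A^*$); $X$ is a closed subspace of $\mathcal A^*$ invariant under this action. $X^*$ is a right Banach $\mathcal A$-module via $\langle m\cdot a,f\rangle=\langle m,a\cdot f\rangle$. $B_{\mathcal A}(\mathcal A,X^* )$ denotes the Banach space of bounded linear maps $T:\mathcal A\to X^*$ with $T(ab)=T(a)\cdot b$ for all $a,b\in\mathcal A$, with the operator norm $\|\cdot\|_M$. For $a\in\mathcal A$ and $f\in X$, $af$ denotes the bounded linear functional on $B_{\mathcal A}(\mathcal A,X^* )$ given by $\langle af,T\rangle=\langle f,T(a)\rangle$. $Q_X$ is the norm closure in $B_{\mathcal A}(\mathcal A,X^* )^*$ of the linear span of $\{af:a\in\mathcal A,f\in X\}$. *)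

From HB Require Import structures.
From mathcomp Require Import all_boot all_order all_algebra.
From mathcomp Require Import all_classical all_reals all_analysis.
Set Implicit Arguments. Unset Strict Implicit. Unset Printing Implicit Defensive.
Import Order.TTheory GRing.Theory Num.Theory.
Import numFieldNormedType.Exports.
Local Open Scope ring_scope.
Local Open Scope classical_set_scope.

Section BanachDual.
Context {K : numFieldType} {A : normedModType K}.

Definition banach_algebra_mul (mul : A -> A -> A) : Prop :=
  [/\ (forall a b c, mul a (mul b c) = mul (mul a b) c),
      (forall a b c, mul (a + b) c = mul a c + mul b c),
      (forall a b c, mul a (b + c) = mul a b + mul a c),
      (forall (k : K) a b, mul (k *: a) b = k *: mul a b /\ mul a (k *: b) = k *: mul a b)
    & (forall a b, `|mul a b| <= `|a| * `|b|)].

(* d is a bound for the functional f : A -> K, i.e. |f x| <= d |x|;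
   the norm of f in A^* is the least such d. *)
Definition fbound (f : A -> K) (d : K) : Prop := forall x, `|f x| <= d * `|x|.

Definition in_dual (f : A -> K) : Prop :=
  [/\ (forall x y, f (x + y) = f x + f y),
      (forall (k : K) x, f (k *: x) = k * f x)
    & exists c, fbound f c].

Definition dact (mul : A -> A -> A) (a : A) (f : A -> K) : A -> K :=
  fun b => f (mul b a).

Definition closed_left_submodule (mul : A -> A -> A) (X : set (A -> K)) : Prop :=
  [/\ (forall f, X f -> in_dual f),
      X (fun _ => 0),
      (forall f g, X f -> X g -> X (fun x => f x + g x)),
      (forall (k : K) f, X f -> X (fun x => k * f x)) /\
      (forall f, in_dual f ->
         (forall e : K, 0 < e -> exists g, X g /\ fbound (fun x => f x - g x) e) ->
         X f)
    & (forall a f, X f -> X (dact mul a f))].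

(* Maps T : A -> X^*; an element of X^* is represented as a function
   (A -> K) -> K, only its values on X being relevant.
   c bounds T in the operator norm of B(A, X^* ):
   |<f, T a>| <= c |a| ||f|| for f in X (||f|| the least bound d of f). *)
Definition Tbound (X : set (A -> K)) (T : A -> (A -> K) -> K) (c : K) : Prop :=
  forall a f d, X f -> fbound f d -> `|T a f| <= c * `|a| * d.

Definition in_BA (mul : A -> A -> A) (X : set (A -> K))
    (T : A -> (A -> K) -> K) : Prop :=
  [/\ (forall a f g, X f -> X g -> T a (fun x => f x + g x) = T a f + T a g),
      (forall a (k : K) f, X f -> T a (fun x => k * f x) = k * T a f),
      (forall a b f, X f -> T (a + b) f = T a f + T b f),
      (forall (k : K) a f, X f -> T (k *: a) f = k * T a f) /\
      (exists c, Tbound X T c)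
    & (* T(ab) = T(a).b, where <m.b, f> = <m, b.f> *)
      (forall a b f, X f -> T (mul a b) f = T a (dact mul b f))].

Definition Qbound (mul : A -> A -> A) (X : set (A -> K))
    (q : (A -> (A -> K) -> K) -> K) (d : K) : Prop :=
  forall T c, in_BA mul X T -> Tbound X T c -> `|q T| <= d * c.

Definition in_BA_dual (mul : A -> A -> A) (X : set (A -> K))
    (q : (A -> (A -> K) -> K) -> K) : Prop :=
  [/\ (forall T T', in_BA mul X T -> in_BA mul X T' ->
         q (fun a f => T a f + T' a f) = q T + q T'),
      (forall (k : K) T, in_BA mul X T -> q (fun a f => k * T a f) = k * q T)
    & exists d, Qbound mul X q d].

Definition af_fun (a : A) (f : A -> K) : (A -> (A -> K) -> K) -> K :=
  fun T => T a f.

(* Q_X : norm closure in B_A(A,X^* )^* of span{ af : a in A, f in X } *)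
Definition in_QX (mul : A -> A -> A) (X : set (A -> K))
    (q : (A -> (A -> K) -> K) -> K) : Prop :=
  in_BA_dual mul X q /\
  forall e : K, 0 < e ->
    exists (n : nat) (k : 'I_n -> K) (a : 'I_n -> A) (f : 'I_n -> A -> K),
      (forall i, X (f i)) /\
      Qbound mul X (fun T => q T - \sum_(i < n) k i * af_fun (a i) (f i) T) e.

Definition QXbound (mul : A -> A -> A) (X : set (A -> K))
    (psi : ((A -> (A -> K) -> K) -> K) -> K) (c : K) : Prop :=
  forall q d, in_QX mul X q -> Qbound mul X q d -> `|psi q| <= c * d.

Definition in_QX_dual (mul : A -> A -> A) (X : set (A -> K))
    (psi : ((A -> (A -> K) -> K) -> K) -> K) : Prop :=
  [/\ (forall q q', in_QX mul X q -> in_QX mul X q' ->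
         psi (fun T => q T + q' T) = psi q + psi q'),
      (forall (k : K) q, in_QX mul X q -> psi (fun T => k * q T) = k * psi q)
    & exists c, QXbound mul X psi c].

Definition canonQX (T : A -> (A -> K) -> K) : ((A -> (A -> K) -> K) -> K) -> K :=
  fun q => q T.

End BanachDual.

(* For psi in (Q_X)^* put <f, T a> := psi(af).  A bounded psi only sees how
   its argument acts on B_A(A, X^* ), so it respects every linear relation
   among the af that holds there; hence T is a bounded module map with the
   bound of psi.  psi and q |-> q(T) agree on the span of the af, hence on its
   closure Q_X.  Conversely a bound for q |-> q(T) on Q_X bounds T, because
   <f, T a> = af(T) and ||af|| <= ||a|| ||f||. *)

From HB Require Import structures.
From mathcomp Require Import all_boot all_order all_algebra.
From mathcomp Require Import all_classical all_reals all_analysis.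
From mathcomp Require Import ring.
Import Order.TTheory GRing.Theory Num.Theory.
Import numFieldNormedType.Exports.
Local Open Scope ring_scope.
Local Open Scope classical_set_scope.
Set Implicit Arguments. Unset Strict Implicit.

Lemma eq0_of_norm_le_mul (K : numFieldType) (x C : K) :
  (forall e, 0 < e -> `|x| <= e * C) -> x = 0.
Proof.
move=> small; have C_ge0 : 0 <= C.
  by rewrite -[C]mul1r (le_trans (normr_ge0 x)) ?small.
have C1_gt0 : 0 < C + 1 by rewrite ltr_wpDl.
apply/normr0_eq0/eqP; rewrite eq_le normr_ge0 andbT.
apply/ler_addgt0Pr => e e_gt0; rewrite add0r.
apply: le_trans (small _ (divr_gt0 e_gt0 C1_gt0)) _.
by rewrite mulrAC ler_pdivrMr // ler_pM2l // lerDl.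
Qed.

Section BAdual.
Context {K : numFieldType} {A : normedModType K}.
Variables (mul : A -> A -> A) (X : set (A -> K)).

Lemma in_BA0 : in_BA mul X (fun _ _ => 0).
Proof.
split; do ?by move=> *; rewrite ?addr0 ?mulr0.
split; first by move=> *; rewrite mulr0.
by exists 0 => a f d _ _; rewrite normr0 !mul0r.
Qed.

Lemma in_BA_0l T f : in_BA mul X T -> X f -> T 0 f = 0.
Proof. by move=> [_ _ _ [homT _] _] Xf; rewrite -(scale0r 0) homT // mul0r. Qed.

Lemma Qbound_af a f d : X f -> fbound f d -> Qbound mul X (af_fun a f) (`|a| * d).
Proof. by move=> Xf fd T c _ Tc; rewrite /af_fun mulrC mulrA; exact: Tc. Qed.

Lemma QXbound_canonQX T c :
  in_BA mul X T -> Tbound X T c -> QXbound mul X (canonQX T) c.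
Proof. by move=> BT Tc q d _ qd; rewrite mulrC; exact: qd. Qed.

Lemma canonQX_in_QX_dual T : in_BA mul X T -> in_QX_dual mul X (canonQX T).
Proof.
move=> BT; have [_ _ _ [_ [c Tc]] _] := BT.
by split=> //; exists c; exact: QXbound_canonQX.
Qed.

(* On a trivial space every Tbound holds, even with a negative constant, so
   no functional is approximable by the af and Q_X is empty. *)
Lemma in_QX_nontrivial q : in_QX mul X q -> exists x : A, x != 0.
Proof.
move=> [_ approx]; apply: contrapT => trivA.
have A0 (x : A) : x = 0 by apply: contrapT => /eqP x_neq0; apply: trivA; exists x.
have T0_bound : Tbound X (fun _ _ => 0) (-1).
  by move=> a f d _ _; rewrite (A0 a) !normr0 mulr0 mul0r.
have [n [k [a [f [_ qs]]]]] := approx 1 ltr01.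
have := le_trans (normr_ge0 _) (qs _ _ in_BA0 T0_bound).
by rewrite mul1r oppr_ge0 ler10.
Qed.

Section Nontrivial.
Hypothesis X0 : X (fun _ => 0).
Variable x0 : A.
Hypothesis x0_neq0 : x0 != 0.

Lemma Tbound_ge0 T c : Tbound X T c -> 0 <= c.
Proof.
move=> /(_ x0 _ 1 X0) Tc.
have fbound0 : fbound (fun _ : A => 0 : K) 1 by move=> y; rewrite normr0 mul1r.
have := le_trans (normr_ge0 _) (Tc fbound0).
by rewrite mulr1 pmulr_lge0 // normr_gt0.
Qed.

Lemma Qbound_subrr q e : 0 < e -> Qbound mul X (fun T => q T - q T) e.
Proof.
move=> e_gt0 T c _ Tc; rewrite subrr normr0.
exact: mulr_ge0 (ltW e_gt0) (Tbound_ge0 Tc).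
Qed.

Lemma in_QX0 : in_QX mul X (fun _ => 0).
Proof.
split.
  split=> [T T' _ _|k T _|]; rewrite ?addr0 ?mulr0 //.
  by exists 0 => T c _ _; rewrite normr0 mul0r.
move=> e e_gt0; exists 0%N, (fun=> 0), (fun=> 0), (fun=> fun=> 0); split=> //.
by under eq_fun do rewrite big_ord0; exact: Qbound_subrr.
Qed.

Lemma in_QX_af a f d : X f -> fbound f d -> in_QX mul X (af_fun a f).
Proof.
move=> Xf fd; split.
  by split=> //; exists (`|a| * d); exact: Qbound_af.
move=> e e_gt0; exists 1%N, (fun=> 1), (fun=> a), (fun=> f); split=> //.
by under eq_fun do rewrite big_ord1 mul1r; exact: Qbound_subrr.
Qed.

Lemma in_QXZ k q : in_QX mul X q -> in_QX mul X (fun T => k * q T).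
Proof.
move=> [[addq homq [d qd]] approx]; split.
  split=> [T T' BT BT'|k' T BT|]; first by rewrite addq // mulrDr.
    by rewrite homq // mulrCA.
  exists (`|k| * d) => T c BT Tc.
  by rewrite normrM -mulrA ler_wpM2l // qd.
move=> e e_gt0.
have k1_gt0 : 0 < `|k| + 1 by rewrite ltr_wpDl.
have [n [k' [a [f [Xf qs]]]]] := approx _ (divr_gt0 e_gt0 k1_gt0).
exists n, (fun i => k * k' i), a, f; split=> // T c BT Tc.
have c_ge0 := Tbound_ge0 Tc.
under eq_bigr do rewrite -mulrA; rewrite -mulr_sumr -mulrBr normrM.
apply: le_trans (ler_wpM2l (normr_ge0 k) (qs T c BT Tc)) _.
rewrite mulrA ler_wpM2r // mulrCA ler_piMr ?ltW //.
by rewrite ltr_pdivrMr // mul1r ltrDl.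
Qed.

Lemma in_QXD q q' :
  in_QX mul X q -> in_QX mul X q' -> in_QX mul X (fun T => q T + q' T).
Proof.
move=> [[addq homq [d qd]] approx] [[addq' homq' [d' qd']] approx']; split.
  split=> [T T' BT BT'|k T BT|]; first by rewrite addq // addq' // addrACA.
    by rewrite homq // homq' // mulrDr.
  exists (d + d') => T c BT Tc; rewrite mulrDl.
  exact: le_trans (ler_normD _ _) (lerD (qd _ _ BT Tc) (qd' _ _ BT Tc)).
move=> e e_gt0; have e2_gt0 : 0 < e / 2 by rewrite divr_gt0.
have [n1 [k1 [a1 [f1 [Xf1 qs1]]]]] := approx _ e2_gt0.
have [n2 [k2 [a2 [f2 [Xf2 qs2]]]]] := approx' _ e2_gt0.
pose glue V (v1 : 'I_n1 -> V) (v2 : 'I_n2 -> V) (i : 'I_(n1 + n2)) :=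
  match fintype.split i with inl j => v1 j | inr j => v2 j end.
exists (n1 + n2)%N, (glue _ k1 k2), (glue _ a1 a2), (glue _ f1 f2); split.
  by move=> i; rewrite /glue; case: (fintype.split i).
move=> T c BT Tc; rewrite big_split_ord /glue.
under eq_bigr do rewrite (unsplitK (inl _)).
under [Y in _ - (_ + Y)]eq_bigr do rewrite (unsplitK (inr _)).
rewrite opprD addrACA (splitr e) mulrDl.
exact: le_trans (ler_normD _ _) (lerD (qs1 T c BT Tc) (qs2 T c BT Tc)).
Qed.

Lemma in_QXB q q' :
  in_QX mul X q -> in_QX mul X q' -> in_QX mul X (fun T => q T - q' T).
Proof.
move=> Qq Qq'; under eq_fun do rewrite -mulN1r.
exact: in_QXD (in_QXZ _ Qq').
Qed.

Lemma in_QX_sum (I : Type) (r : seq I) (F : I -> (A -> (A -> K) -> K) -> K) :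
  (forall i, in_QX mul X (F i)) -> in_QX mul X (fun T => \sum_(i <- r) F i T).
Proof.
move=> QF; elim: r => [|i r IHr].
  by under eq_fun do rewrite big_nil; exact: in_QX0.
by under eq_fun do rewrite big_cons; exact: in_QXD.
Qed.

Section QXdual.
Variable psi : ((A -> (A -> K) -> K) -> K) -> K.
Hypothesis psi_dual : in_QX_dual mul X psi.

Lemma QX_dualB q q' : in_QX mul X q -> in_QX mul X q' ->
  psi (fun T => q T - q' T) = psi q - psi q'.
Proof.
case: psi_dual => addpsi hompsi _ Qq Qq'.
under eq_fun do rewrite -mulN1r.
by rewrite addpsi ?hompsi ?mulN1r //; exact: in_QXZ.
Qed.

Lemma QX_dual_eq0 q : in_QX mul X q -> Qbound mul X q 0 -> psi q = 0.
Proof.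
have [_ _ [c psic]] := psi_dual => Qq /(psic _ _ Qq).
by rewrite mulr0 normr_le0 => /eqP.
Qed.

Lemma QX_dual_sum (I : Type) (r : seq I) F : (forall i, in_QX mul X (F i)) ->
  psi (fun T => \sum_(i <- r) F i T) = \sum_(i <- r) psi (F i).
Proof.
case: psi_dual => addpsi _ _ QF; elim: r => [|i r IHr].
  under eq_fun do rewrite big_nil; rewrite big_nil.
  by apply: QX_dual_eq0 in_QX0 _ => T c _ _; rewrite normr0 mul0r.
under eq_fun do rewrite big_cons.
by rewrite addpsi // ?big_cons ?IHr //; exact: in_QX_sum.
Qed.

Lemma QX_dual_eq_on_BA q q' : in_QX mul X q -> in_QX mul X q' ->
  (forall T, in_BA mul X T -> q T = q' T) -> psi q = psi q'.
Proof.
move=> Qq Qq' qq'; apply/subr0_eq; rewrite -QX_dualB //.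
apply: QX_dual_eq0 (in_QXB Qq Qq') _ => T c BT _.
by rewrite qq' // subrr normr0 mul0r.
Qed.

Definition QX_dual_op : A -> (A -> K) -> K := fun a f => psi (af_fun a f).

Hypothesis X_sub : closed_left_submodule mul X.

Lemma in_QX_af_of_sub a f : X f -> in_QX mul X (af_fun a f).
Proof.
case: X_sub => dualX _ _ _ _ Xf; have [_ _ [d fd]] := dualX f Xf.
exact: in_QX_af fd.
Qed.

Lemma in_BA_QX_dual_op : in_BA mul X QX_dual_op.
Proof.
have [_ _ X_add [X_scale _] X_dact] := X_sub.
have [addpsi hompsi [c psic]] := psi_dual.
have QX_af := in_QX_af_of_sub; rewrite /QX_dual_op; split.
- move=> a f g Xf Xg; rewrite -addpsi; [|exact: QX_af..].
  apply: QX_dual_eq_on_BA => [||T [addT _ _ _ _]]; last exact: addT.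
    exact/QX_af/X_add.
  exact: in_QXD (QX_af _ _ Xf) (QX_af _ _ Xg).
- move=> a k f Xf; rewrite -hompsi; last exact: QX_af.
  apply: QX_dual_eq_on_BA => [||T [_ homT _ _ _]]; last exact: homT.
    exact/QX_af/X_scale.
  exact: in_QXZ (QX_af _ _ Xf).
- move=> a b f Xf; rewrite -addpsi; [|exact: QX_af..].
  apply: QX_dual_eq_on_BA => [||T [_ _ addT _ _]]; last exact: addT.
    exact: QX_af.
  exact: in_QXD (QX_af _ _ Xf) (QX_af _ _ Xf).
- split.
    move=> k a f Xf; rewrite -hompsi; last exact: QX_af.
    apply: QX_dual_eq_on_BA => [||T [_ _ _ [homT _] _]]; last exact: homT.
      exact: QX_af.
    exact: in_QXZ (QX_af _ _ Xf).
  exists c => a f d Xf fd; rewrite -mulrA.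
  exact: psic (QX_af a _ Xf) (Qbound_af a Xf fd).
- move=> a b f Xf.
  apply: QX_dual_eq_on_BA => [||T [_ _ _ _ dactT]]; last exact: dactT.
    exact: QX_af.
  exact/QX_af/X_dact.
Qed.

Lemma QX_dual_opE q : in_QX mul X q -> psi q = canonQX QX_dual_op q.
Proof.
move=> Qq; have [_ hompsi [c psic]] := psi_dual.
have BT := in_BA_QX_dual_op; have [_ _ _ [_ [cT Tc]] _] := BT.
apply/subr0_eq/(@eq0_of_norm_le_mul _ _ (c + cT)).
move=> e e_gt0; have [_ /(_ e e_gt0) [n [k [a [f [Xf qs]]]]]] := Qq.
pose s T := \sum_(i < n) k i * af_fun (a i) (f i) T.
have Qs_i i : in_QX mul X (fun T => k i * af_fun (a i) (f i) T).
  exact/in_QXZ/in_QX_af_of_sub.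
have Qs : in_QX mul X s by exact: in_QX_sum.
have psi_s : psi s = s QX_dual_op.
  rewrite QX_dual_sum //; apply: eq_bigr => i _.
  by rewrite hompsi //; exact: in_QX_af_of_sub.
have -> : psi q - canonQX QX_dual_op q =
          psi (fun T => q T - s T) - (q QX_dual_op - s QX_dual_op).
  by rewrite QX_dualB // psi_s /canonQX; ring.
rewrite mulrDr [e * c]mulrC.
apply: le_trans (ler_normB _ _) (lerD (psic _ _ (in_QXB Qq Qs) qs) _).
exact: qs.
Qed.

End QXdual.
End Nontrivial.

Lemma Tbound_canonQX T c : X (fun _ => 0) -> in_BA mul X T ->
  Tbound X T c <-> QXbound mul X (canonQX T) c.
Proof.
move=> X0 BT; split; first exact: QXbound_canonQX.
move=> Tc a f d Xf fd; have [->|a_neq0] := eqVneq a 0.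
  by rewrite in_BA_0l // !normr0 mulr0 mul0r.
rewrite -mulrA; exact: Tc (in_QX_af X0 a_neq0 a Xf fd) (Qbound_af a Xf fd).
Qed.

End BAdual.

Theorem mainTheorem1 (K : numFieldType) (A : completeNormedModType K)
    (mul : A -> A -> A) (X : set (A -> K)) :
  banach_algebra_mul mul ->
  closed_left_submodule mul X ->
  [/\ (* canonQX maps B_A(A,X^* ) into (Q_X)^* *)
      (forall T, in_BA mul X T -> in_QX_dual mul X (canonQX T)),
      (* isometrically: T and canonQX T have the same bounds, hence equal norms *)
      (forall T (c : K), in_BA mul X T -> 0 <= c ->
         (Tbound X T c <-> QXbound mul X (canonQX T) c))
    & (* onto (Q_X)^* *)
      (forall psi, in_QX_dual mul X psi ->
         exists T, in_BA mul X T /\ forall q, in_QX mul X q -> psi q = canonQX T q)].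
Proof.
move=> _ X_sub; have [_ X0 _ _ _] := X_sub; split.
- exact: canonQX_in_QX_dual.
- by move=> T c BT _; exact: Tbound_canonQX.
move=> psi psi_dual; have [[x0 x0_neq0]|trivA] := pselect (exists x : A, x != 0).
  exists (QX_dual_op psi); split.
    exact: (in_BA_QX_dual_op X0 x0_neq0 psi_dual X_sub).
  exact: (QX_dual_opE X0 x0_neq0 psi_dual X_sub).
exists (fun _ _ => 0); split; first exact: in_BA0.
by move=> q /in_QX_nontrivial.
Qed.
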